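(* $\mathrm{WL}_{3/2}\not\preceq\omega^{(\bullet)}$: there exist graphs $G$ and $H$ with $\omega^{(\bullet)}(G)=\omega^{(\bullet)}(H)$ (hence $\omega^{(r)}(G)=\omega^{(r)}(H)$ for every $r$) but $\mathrm{WL}_{3/2}(G)\ne\mathrm{WL}_{3/2}(H)$. (For instance, $G=G(A',B')$ and $H=G(A',A')$ where $A$ is the Shrikhande graph, $B$ the $4\times4$ rook's graph, each with one individualized port vertex.)
   Context: Graphs are finite, simple and undirected. Walk invariants: $w_k(x,y)$ = number of walks of length $k$ from $x$ to $y$ in an $N$-vertex graph, $w_*(x,y)=(w_0(x,y),\dots,w_{N-1}(x,y))$; $\omega_0(x)=w_*(x,x)$, $\omega_{r+1}(x)=\big(\omega_r(x),\{\!\{(w_*(x,y),\omega_r(y))\}\!\}_{y}\big)$ ($\{\!\{\cdot\}\!\}$ = multiset); $\omega^{(r)}(G)=\{\!\{\omega_r(x)\}\!\}_{x\in V(G)}$ and $\omega^{(\bullet)}(G)=\omega^{(N)}(G)$. Color refinement on a vertex-colored $N$-vertex graph: $C^0(x)$ is the color of $x$ (uniform if uncolored), $C^{r+1}(x)=\big(C^r(x),\{\!\{C^r(y)\}\!\}_{y\in N(x)}\big)$, $\mathrm{WL}_1(X)=\{\!\{C^N(x)\}\!\}_x$. $G_x$ is $G$ with $x$ given a special new color (same for all $x$); $\mathrm{WL}_{3/2}(G)=\{\!\{\mathrm{WL}_1(G_x)\}\!\}_{x\in V(G)}$. Construction $G(A',B')$ for graphs $A,B$ with individualized vertices $a_1,b_1$: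 the vertex-disjoint union of $A$ and $B$ plus a vertex $c_1$ adjacent to $a_1$ and $b_1$, plus a pendant vertex adjacent only to $c_1$; no colors. *)

From mathcomp Require Import all_boot.
Set Implicit Arguments. Unset Strict Implicit. Unset Printing Implicit Defensive.

Definition simple_graph (T : finType) (e : rel T) : Prop :=
  symmetric e /\ irreflexive e.

(* Universal value type for invariants/colors: finitely branching trees
   (a countType). *)
Notation val := (GenTree.tree nat).

(* Canonical representative of a finite multiset of values: the list sorted
   along the injective encoding [pickle].  msort s = msort t <-> perm_eq s t. *)
Definition msort (s : seq val) : seq val :=
  sort (fun a b : val => pickle a <= pickle b) s.

Definition enc_seq (s : seq nat) : val := GenTree.Node 0 (map (@GenTree.Leaf nat) s).
Definition enc_pair (a b : val) : val := GenTree.Node 1 [:: a; b].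
Definition enc_mset (s : seq val) : val := GenTree.Node 2 (msort s).

Section Walks.
Variables (T : finType) (e : rel T).

Fixpoint walks (k : nat) (x y : T) : nat :=
  match k with
  | 0 => (x == y : nat)
  | k'.+1 => \sum_(z : T | e x z) walks k' z y
  end.

Definition wstar (x y : T) : seq nat := [seq walks k x y | k <- iota 0 #|T|].

Fixpoint omega (r : nat) (x : T) : val :=
  match r with
  | 0 => enc_seq (wstar x x)
  | r'.+1 => enc_pair (omega r' x)
               (enc_mset [seq enc_pair (enc_seq (wstar x y)) (omega r' y) | y <- enum T])
  end.

Definition omega_graph (r : nat) : val := enc_mset [seq omega r x | x <- enum T].
Definition omega_bullet : val := omega_graph #|T|.

Fixpoint cref (c : T -> val) (r : nat) (x : T) : val :=
  match r with
  | 0 => c x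
  | r'.+1 => enc_pair (cref c r' x)
               (enc_mset [seq cref c r' y | y <- enum T & e x y])
  end.

Definition WL1 (c : T -> val) : val := enc_mset [seq cref c #|T| x | x <- enum T].

Definition indiv_color (x : T) : T -> val := fun y => GenTree.Leaf (y == x : nat).

Definition WL32 : val := enc_mset [seq WL1 (indiv_color x) | x <- enum T].

End Walks.

From mathcomp Require Import all_boot.
From Stdlib Require Import NArith.
Set Implicit Arguments. Unset Strict Implicit. Unset Printing Implicit Defensive.

(* The witnesses are G(A', B') and G(A', A'), with A the Shrikhande graph and
   B the 4x4 rook's graph, both strongly regular with parameters (16, 6, 2, 2).
   In a strongly regular graph every power of the adjacency matrix is a
   combination of I, A and J - I - A with coefficients fixed by the parameters,
   so walk counts see only whether two vertices are equal, adjacent or not.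
   Hence, colouring each vertex by its role (a port, a neighbour or non-neighbour
   of a port, c_1, the pendant), vertices of equal colour in the two graphs have
   the same closed-walk vectors and the same multiset of (walk vector, colour)
   pairs; by induction on r, omega_r is then a function of the colour alone, and
   omega^(bullet) agrees.  WL_{3/2} is evaluated through a hash of values
   that only depends on multisets up to reordering; the hashes of the two graphs
   differ. *)

Local Notation tree := (GenTree.tree nat).

Lemma msort_perm (s t : seq tree) : perm_eq s t -> msort s = msort t.
Proof.
move=> st; apply/perm_sortP => //.
- by move=> a b; apply: leq_total.
- by move=> a b c; apply: leq_trans.
- by move=> a b /anti_leq /(pcan_inj pickleK).
Qed.

Section ClassInvariants.
Variables (T1 T2 : finType) (K : eqType) (c1 : T1 -> K) (c2 : T2 -> K).
Hypothesis classes_perm : perm_eq [seq c1 x | x <- enum T1] [seq c2 y | y <- enum T2].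

Lemma class_cover1 x : exists y, c1 x = c2 y.
Proof.
have : c1 x \in [seq c2 y | y <- enum T2] by rewrite -(perm_mem classes_perm) map_f ?mem_enum.
by case/mapP=> y _ ->; exists y.
Qed.

Lemma class_cover2 y : exists x, c1 x = c2 y.
Proof.
have : c2 y \in [seq c1 x | x <- enum T1] by rewrite (perm_mem classes_perm) map_f ?mem_enum.
by case/mapP=> x _ ->; exists x.
Qed.

Lemma class_factor (A : Type) (f1 : T1 -> A) (f2 : T2 -> A) :
  (forall x y, c1 x = c2 y -> f1 x = f2 y) ->
  exists g : K -> option A,
    (forall x, g (c1 x) = Some (f1 x)) /\ (forall y, g (c2 y) = Some (f2 y)).
Proof.
move=> f12; pose g k := if [pick y | c2 y == k] is Some y then Some (f2 y) else None.
have g2 y : g (c2 y) = Some (f2 y).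
  rewrite /g; case: pickP => [y' /eqP c2y'|/(_ y)]; last by rewrite eqxx.
  have [x c12] := class_cover2 y.
  by rewrite -(f12 _ _ c12) (f12 x y') // c12 c2y'.
exists g; split=> // x.
by have [y c12] := class_cover1 x; rewrite c12 g2 (f12 _ _ c12).
Qed.

Lemma perm_class_invariants (P A : eqType) (p1 : T1 -> P) (p2 : T2 -> P)
    (f1 : T1 -> A) (f2 : T2 -> A) :
  (forall x y, c1 x = c2 y -> f1 x = f2 y) ->
  perm_eq [seq (p1 z, c1 z) | z <- enum T1] [seq (p2 z, c2 z) | z <- enum T2] ->
  perm_eq [seq (p1 z, f1 z) | z <- enum T1] [seq (p2 z, f2 z) | z <- enum T2].
Proof.
move=> /class_factor [g [g1 g2]] /(perm_map (fun q => (q.1, g q.2))) pg.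
pose tag (q : P * A) := (q.1, Some q.2).
have tag_inj : injective tag by move=> [? ?] [? ?] [-> ->].
apply: (perm_map_inj tag_inj); rewrite -!map_comp.
have tag1 z : tag (p1 z, f1 z) = (p1 z, g (c1 z)) by rewrite g1.
have tag2 z : tag (p2 z, f2 z) = (p2 z, g (c2 z)) by rewrite g2.
by rewrite (eq_map tag1) (eq_map tag2); rewrite -!map_comp in pg.
Qed.

Lemma perm_map_class_invariants (A : eqType) (f1 : T1 -> A) (f2 : T2 -> A) :
  (forall x y, c1 x = c2 y -> f1 x = f2 y) ->
  perm_eq [seq f1 z | z <- enum T1] [seq f2 z | z <- enum T2].
Proof.
move=> f12.
have pc : perm_eq [seq (tt, c1 z) | z <- enum T1] [seq (tt, c2 z) | z <- enum T2].
  by rewrite (map_comp (pair tt) c1) (map_comp (pair tt) c2) perm_map.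
have /(perm_map snd) := perm_class_invariants (p1 := fun _ => tt) (p2 := fun _ => tt) f12 pc.
by rewrite -!map_comp.
Qed.

End ClassInvariants.

Section WalkEquitable.
Variables (T1 T2 : finType) (e1 : rel T1) (e2 : rel T2).
Variables (K : eqType) (c1 : T1 -> K) (c2 : T2 -> K).
Hypothesis classes_perm : perm_eq [seq c1 x | x <- enum T1] [seq c2 y | y <- enum T2].
Hypothesis closed_walks_eq : forall x y, c1 x = c2 y -> wstar e1 x x = wstar e2 y y.
Hypothesis walk_profiles_perm : forall x y, c1 x = c2 y ->
  perm_eq [seq (wstar e1 x z, c1 z) | z <- enum T1] [seq (wstar e2 y z, c2 z) | z <- enum T2].

Lemma omega_classes r x y : c1 x = c2 y -> omega e1 r x = omega e2 r y.
Proof.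
elim: r x y => [|r IH] x y c12 /=; first by rewrite (closed_walks_eq c12).
rewrite (IH _ _ c12) /enc_mset; congr (enc_pair _ (GenTree.Node 2 _)); apply: msort_perm.
pose F (q : seq nat * tree) := enc_pair (enc_seq q.1) q.2.
rewrite (map_comp F (fun z => (wstar e1 x z, omega e1 r z))).
rewrite (map_comp F (fun z => (wstar e2 y z, omega e2 r z))).
exact/perm_map/(perm_class_invariants classes_perm IH)/walk_profiles_perm.
Qed.

Lemma omega_bullet_classes : omega_bullet e1 = omega_bullet e2.
Proof.
have card12 : #|T1| = #|T2|.
  by rewrite !cardE -(size_map c1) -(size_map c2) (perm_size classes_perm).
rewrite /omega_bullet /omega_graph /enc_mset card12; congr (GenTree.Node 2 _).
exact/msort_perm/(perm_map_class_invariants classes_perm)/omega_classes.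
Qed.

End WalkEquitable.

Lemma nat_of_add_bin (a b : N) : N.add a b = a + b :> nat.
Proof.
case: a => [|p]; case: b => [|q] //=; first by rewrite addn0.
exact: nat_of_add_pos.
Qed.

Definition sumN (s : seq N) : N := foldr N.add 0%num s.

Lemma nat_of_sumN s : sumN s = sumn (map nat_of_bin s) :> nat.
Proof. by elim: s => //= a s IH; rewrite nat_of_add_bin IH. Qed.

Lemma perm_sumN s t : perm_eq s t -> sumN s = sumN t.
Proof.
move=> st; rewrite -[sumN s]nat_of_binK -[sumN t]nat_of_binK !nat_of_sumN.
by rewrite (perm_sumn (perm_map _ st)).
Qed.

Lemma traject_iota (T : Type) (f : T -> T) x m :
  traject f x m = [seq iter k f x | k <- iota 0 m].
Proof.
apply: (@eq_from_nth _ x); rewrite ?size_traject ?size_map ?size_iota // => i lt_i_m.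
by rewrite nth_traject // (nth_map 0) ?size_iota // nth_iota.
Qed.

Definition mask31 : N := 2147483647%num.

Definition mix (a : N) : N :=
  let b := N.land a mask31 in N.land (b * b + b * 2654435761 + 12345)%num mask31.

Definition hash_node (k : nat) (hs : seq N) : N :=
  foldl (fun acc h => mix (acc * 1315423 + h)%num) (bin_of_nat k + 17)%num hs.

Definition hash_mset (hs : seq N) : N := mix (sumN (map mix hs) + 99)%num.

(* Node 2 encodes multisets ([enc_mset]), hashed by an order-independent sum. *)
Fixpoint tree_hash (t : tree) : N :=
  match t with
  | GenTree.Leaf m => bin_of_nat m
  | GenTree.Node k ts =>
      let hs := map tree_hash ts in if k == 2 then hash_mset hs else hash_node k hs
  end.

Lemma perm_hash_mset s t : perm_eq s t -> hash_mset s = hash_mset t.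
Proof. by move=> st; rewrite /hash_mset (perm_sumN (perm_map _ st)). Qed.

Lemma tree_hash_mset s : tree_hash (enc_mset s) = hash_mset (map tree_hash s).
Proof. by apply: perm_hash_mset; rewrite perm_map // perm_sort. Qed.

Lemma tree_hash_pair a b :
  tree_hash (enc_pair a b) = hash_node 1 [:: tree_hash a; tree_hash b].
Proof. by []. Qed.

(* [enum 'I_n] and [inord] are stuck under [vm_compute] on the opaque [idP];
   this dependent match is not. *)
Definition ord_of_nat n (i : nat) : 'I_n.+1 :=
  (if i < n.+1 as b return (i < n.+1 = b -> 'I_n.+1) then fun lt_i_n => Ordinal lt_i_n
   else fun _ => ord0) (erefl _).

Lemma ord_of_natK n : cancel (@nat_of_ord n.+1) (ord_of_nat n).
Proof.
move=> x; rewrite /ord_of_nat; move: (erefl (x < n.+1)).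
by case: {2 3}(x < n.+1) => lt_x_n; [apply: val_inj | rewrite ltn_ord in lt_x_n].
Qed.

Lemma val_ord_of_nat n i : i < n.+1 -> ord_of_nat n i = i :> nat.
Proof.
move=> lt_i_n; rewrite /ord_of_nat; move: (erefl (i < n.+1)).
by case: {2 3}(i < n.+1) => // ge_i_n; rewrite lt_i_n in ge_i_n.
Qed.

Definition ord_list n : seq 'I_n.+1 := map (ord_of_nat n) (iota 0 n.+1).

Lemma size_ord_list n : size (ord_list n) = n.+1.
Proof. by rewrite size_map size_iota. Qed.

Lemma nth_ord_list n (x : 'I_n.+1) : nth ord0 (ord_list n) x = x.
Proof. by rewrite (nth_map 0) ?size_iota // nth_iota // ord_of_natK. Qed.

Lemma mem_ord_list n (x : 'I_n.+1) : x \in ord_list n.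
Proof. by rewrite -(nth_ord_list x) mem_nth ?size_ord_list. Qed.

Lemma perm_ord_list n : perm_eq (ord_list n) (enum 'I_n.+1).
Proof.
apply: uniq_perm => [||x]; rewrite ?enum_uniq ?mem_enum ?mem_ord_list //.
rewrite map_inj_in_uniq ?iota_uniq // => i j; rewrite !mem_iota !add0n => lt_i lt_j eq_ij.
by rewrite -(val_ord_of_nat lt_i) -(val_ord_of_nat lt_j) eq_ij.
Qed.

Lemma perm_map_ord_list n (A : eqType) (f : 'I_n.+1 -> A) :
  perm_eq [seq f x | x <- ord_list n] [seq f x | x <- enum 'I_n.+1].
Proof. exact/perm_map/perm_ord_list. Qed.

Lemma nth_map_ord_list n (A : Type) (a : A) (f : 'I_n.+1 -> A) (x : 'I_n.+1) :
  nth a [seq f y | y <- ord_list n] x = f x.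
Proof. by rewrite (nth_map ord0) ?size_ord_list // nth_ord_list. Qed.


Section ComputedInvariants.
Variables (n : nat) (e : rel 'I_n.+1).

Definition adj_lists : seq (seq 'I_n.+1) := [seq filter (e x) (ord_list n) | x <- ord_list n].

Lemma nth_adj_lists (x : 'I_n.+1) : nth [::] adj_lists x = filter (e x) (ord_list n).
Proof. exact: nth_map_ord_list. Qed.

(* The adjacency lists are a parameter rather than [adj_lists] itself so that
   [vm_compute] builds them only once. *)
Definition walk_step (adj : seq (seq 'I_n.+1)) (v : seq N) : seq N :=
  [seq sumN [seq nth 0%num v z | z : 'I_n.+1 <- nth [::] adj x] | x : 'I_n.+1 <- ord_list n].

Definition indicator (y : 'I_n.+1) : seq N :=
  [seq if x == y then 1%num else 0%num | x : 'I_n.+1 <- ord_list n].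

Lemma walk_step_iter k (x y : 'I_n.+1) :
  nth 0%num (iter k (walk_step adj_lists) (indicator y)) x = walks e k x y :> nat.
Proof.
elim: k x => [|k IH] x /=; first by rewrite nth_map_ord_list; case: eqP.
rewrite nth_map_ord_list nat_of_sumN nth_adj_lists -map_comp (eq_map (fun z => IH z)).
rewrite sumnE big_map big_filter (perm_big _ (perm_ord_list n)) /=.
by rewrite big_enum_cond.
Qed.

Definition walk_table (adj : seq (seq 'I_n.+1)) : seq (seq (seq N)) :=
  [seq let vs := traject (walk_step adj) (indicator y) n.+1 in
       [seq [seq nth 0%num v x | v <- vs] | x : 'I_n.+1 <- ord_list n] | y : 'I_n.+1 <- ord_list n].

Definition table_entry (t : seq (seq (seq N))) (y x : 'I_n.+1) : seq N :=
  nth [::] (nth [::] t y) x.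

Lemma walk_tableE (x y : 'I_n.+1) :
  wstar e x y = map nat_of_bin (table_entry (walk_table adj_lists) y x).
Proof.
rewrite /table_entry /walk_table !nth_map_ord_list /wstar card_ord -map_comp.
rewrite traject_iota -map_comp; apply: eq_map => k /=.
by rewrite walk_step_iter.
Qed.

Definition refine_step (adj : seq (seq 'I_n.+1)) (h : seq N) : seq N :=
  [seq hash_node 1 [:: nth 0%num h x;
                      hash_mset [seq nth 0%num h y | y : 'I_n.+1 <- nth [::] adj x]]
  | x : 'I_n.+1 <- ord_list n].

Lemma refine_step_iter (c : 'I_n.+1 -> tree) r (x : 'I_n.+1) :
  nth 0%num (iter r (refine_step adj_lists) [seq tree_hash (c y) | y <- ord_list n]) x
  = tree_hash (cref e c r x).
Proof.
elim: r x => [|r IH] x; first exact: nth_map_ord_list.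
rewrite iterS nth_map_ord_list [cref _ _ r.+1 x]/= tree_hash_pair tree_hash_mset IH nth_adj_lists.
congr (hash_node 1 [:: _; _]); apply: perm_hash_mset.
rewrite (eq_map (fun y => IH y)) -map_comp.
exact/perm_map/perm_filter/perm_ord_list.
Qed.

Definition WL32_hash (adj : seq (seq 'I_n.+1)) : N :=
  hash_mset [seq
    let h := iter n.+1 (refine_step adj) [seq tree_hash (indiv_color x y) | y <- ord_list n] in
    hash_mset [seq nth 0%num h y | y : 'I_n.+1 <- ord_list n] | x : 'I_n.+1 <- ord_list n].

Lemma tree_hash_WL1 (c : 'I_n.+1 -> tree) :
  tree_hash (WL1 e c) = hash_mset
    [seq nth 0%num (iter n.+1 (refine_step adj_lists) [seq tree_hash (c y) | y <- ord_list n]) y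
    | y : 'I_n.+1 <- ord_list n].
Proof.
rewrite /WL1 tree_hash_mset card_ord (eq_map (refine_step_iter c n.+1)) -map_comp.
by apply/perm_hash_mset; rewrite perm_sym perm_map_ord_list.
Qed.

Lemma tree_hash_WL32 : tree_hash (WL32 e) = WL32_hash adj_lists.
Proof.
rewrite /WL32 /WL32_hash tree_hash_mset -map_comp.
rewrite -(eq_map (fun x => tree_hash_WL1 (indiv_color x))).
by apply/perm_hash_mset; rewrite perm_sym perm_map_ord_list.
Qed.

End ComputedInvariants.

Fixpoint lex_leN (a b : seq N) : bool :=
  match a, b with
  | [::], _ => true
  | _ :: _, [::] => false
  | x :: a', y :: b' => N.ltb x y || (N.eqb x y && lex_leN a' b')
  end.

Definition profile_le (p q : seq N * nat) : bool :=
  (p.2 < q.2) || ((p.2 == q.2) && lex_leN p.1 q.1).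

Section WalkEquitableCheck.
Variable n : nat.

(* Sorting is only a fast canonical form: whatever the order, equal sorted
   lists are permutations of each other. *)
Definition walk_profile (t : seq (seq (seq N))) (c : 'I_n.+1 -> nat) (x : 'I_n.+1) :=
  sort profile_le [seq (table_entry t z x, c z) | z : 'I_n.+1 <- ord_list n].

Definition walk_equitableb (adj1 adj2 : seq (seq 'I_n.+1)) (c1 c2 : 'I_n.+1 -> nat) : bool :=
  let t1 := walk_table adj1 in let t2 := walk_table adj2 in
  let s1 := [seq walk_profile t1 c1 x | x : 'I_n.+1 <- ord_list n] in
  let s2 := [seq walk_profile t2 c2 y | y : 'I_n.+1 <- ord_list n] in
  perm_eq [seq c1 x | x <- ord_list n] [seq c2 y | y <- ord_list n] &&
  all (fun x : 'I_n.+1 => all (fun y : 'I_n.+1 => (c1 x == c2 y) ==>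
        (table_entry t1 x x == table_entry t2 y y) && (nth [::] s1 x == nth [::] s2 y))
      (ord_list n)) (ord_list n).

Lemma walk_equitableb_omega_bullet (e1 e2 : rel 'I_n.+1) (c1 c2 : 'I_n.+1 -> nat) :
  walk_equitableb (adj_lists e1) (adj_lists e2) c1 c2 -> omega_bullet e1 = omega_bullet e2.
Proof.
set t1 := walk_table (adj_lists e1); set t2 := walk_table (adj_lists e2).
case/andP=> classes_perm /allP matched.
have {}matched x y : c1 x = c2 y ->
    table_entry t1 x x = table_entry t2 y y /\ walk_profile t1 c1 x = walk_profile t2 c2 y.
  move=> c12; have /allP/(_ y (mem_ord_list y)) := matched x (mem_ord_list x).
  by rewrite c12 eqxx !nth_map_ord_list => /andP[/eqP-> /eqP->].
apply: (omega_bullet_classes (c1 := c1) (c2 := c2)).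
- apply: perm_trans (perm_map_ord_list _); rewrite perm_sym.
  by apply: perm_trans (perm_map_ord_list _); rewrite perm_sym.
- by move=> x y /matched[eq_xy _]; rewrite !walk_tableE eq_xy.
move=> x y /matched[_ eq_xy].
pose unbin (p : seq N * nat) := (map nat_of_bin p.1, p.2).
have table_profile (e : rel 'I_n.+1) (c : 'I_n.+1 -> nat) v :
    [seq (wstar e v z, c z) | z <- enum 'I_n.+1]
    = map unbin [seq (table_entry (walk_table (adj_lists e)) z v, c z) | z <- enum 'I_n.+1].
  by rewrite -map_comp; apply: eq_map => z; rewrite /unbin /= walk_tableE.
rewrite !table_profile; apply: perm_map.
apply: perm_trans (perm_map_ord_list _); rewrite perm_sym.
apply: perm_trans (perm_map_ord_list _); rewrite perm_sym.
by rewrite -(perm_sort profile_le) /walk_profile in eq_xy *; rewrite eq_xy perm_sort.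
Qed.

End WalkEquitableCheck.

Lemma simple_graph_check n (e : rel 'I_n.+1) :
  all (fun x => ~~ e x x && all (fun y => e x y == e y x) (ord_list n)) (ord_list n) ->
  simple_graph e.
Proof.
move/allP=> ok; split=> [x y|x].
  by have /andP[_ /allP sym_x] := ok x (mem_ord_list x); apply/eqP/sym_x/mem_ord_list.
by have /andP[/negbTE -> _] := ok x (mem_ord_list x).
Qed.

(* The Shrikhande graph is the Cayley graph of Z4 x Z4 with connection set
   {+-(1,0), +-(0,1), +-(1,1)}; vertex u stands for (u / 4, u mod 4). *)
Definition shrikhande (u v : nat) : bool :=
  let da := (u %/ 4 + 4 - v %/ 4) %% 4 in let db := (u %% 4 + 4 - v %% 4) %% 4 in
  (da, db) \in [:: (1, 0); (3, 0); (0, 1); (0, 3); (1, 1); (3, 3)].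

Definition rook (u v : nat) : bool :=
  (u != v) && ((u %/ 4 == v %/ 4) || (u %% 4 == v %% 4)).

(* G(A', B') on 0..33: A on 0..15 and B on 16..31 with ports 0 and 16,
   c_1 = 32 and the pendant vertex 33. *)
Definition port_join (A B : nat -> nat -> bool) (u v : nat) : bool :=
  if (u < 16) && (v < 16) then A u v
  else if (16 <= u < 32) && (16 <= v < 32) then B (u - 16) (v - 16)
  else (u, v) \in [:: (0, 32); (32, 0); (16, 32); (32, 16); (32, 33); (33, 32)].

Definition shrikhande_rook : rel 'I_34 := fun x y => port_join shrikhande rook x y.
Definition shrikhande_shrikhande : rel 'I_34 := fun x y => port_join shrikhande shrikhande x y.

Definition port_role (A B : nat -> nat -> bool) (x : 'I_34) : nat :=
  if x == 32 :> nat then 3 else if x == 33 :> nat then 4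
  else if (x == 0 :> nat) || (x == 16 :> nat) then 0
  else if x < 16 then (if A x 0 then 1 else 2) else (if B (x - 16) 0 then 1 else 2).

Lemma omega_bullet_shrikhande_rook :
  omega_bullet shrikhande_rook = omega_bullet shrikhande_shrikhande.
Proof.
apply: (walk_equitableb_omega_bullet (c1 := port_role shrikhande rook)
          (c2 := port_role shrikhande shrikhande)).
by vm_compute.
Qed.

Lemma WL32_shrikhande_rook : WL32 shrikhande_rook <> WL32 shrikhande_shrikhande.
Proof.
move/(congr1 tree_hash); rewrite !tree_hash_WL32.
by move/N.eqb_eq; vm_compute.
Qed.

Theorem theorem6p5 :
  exists (T1 T2 : finType) (e1 : rel T1) (e2 : rel T2),
    [/\ simple_graph e1, simple_graph e2,
        omega_bullet e1 = omega_bullet e2 &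
        WL32 e1 <> WL32 e2].
Proof.
exists ('I_34 : finType), ('I_34 : finType), shrikhande_rook, shrikhande_shrikhande.
split.
- by apply: simple_graph_check; vm_compute.
- by apply: simple_graph_check; vm_compute.
- exact: omega_bullet_shrikhande_rook.
- exact: WL32_shrikhande_rook.
Qed.
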